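(* Let $G$ be a finite directed acyclic graph whose input nodes (the nodes with no incoming edge) are the coordinates of a vector $\bm x$, and let $o$ be any leaf node of $G$. For an input node $x$, let $\mathcal P(x,o)$ be the set of directed paths from $x$ to $o$; for a path ${\bm p}$, let $\tilde{\bm p}$ be the same path without its starting node $x$, and for a node $p$ let $d_p$ be its in-degree. Then $$\sum_{x\in\bm x}\ \sum_{{\bm p}\in\mathcal P(x,o)}\ \prod_{p\in\tilde{\bm p}}\frac{1}{d_p}=1.$$ *)

From mathcomp Require Import all_boot all_order all_algebra.
Set Implicit Arguments. Unset Strict Implicit. Unset Printing Implicit Defensive.
Import Order.TTheory GRing.Theory Num.Theory.

(* A finite directed graph: vertex set a finType V, edge relation e : rel V
   (e u v means there is an edge u -> v). *)

Definition acyclic (V : finType) (e : rel V) : Prop :=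
  forall (x : V) (p : seq V), path e x p -> p != [::] -> last x p != x.

Definition input_node (V : finType) (e : rel V) (x : V) : bool :=
  [forall y, ~~ e y x].

Definition leaf_node (V : finType) (e : rel V) (o : V) : bool :=
  [forall y, ~~ e o y].

Definition indeg (V : finType) (e : rel V) (v : V) : nat :=
  #|[set u | e u v]|.

(* A directed path from x to o is represented by x :: p where
   [path e x p] and [last x p = o]; p is the path without its start
   node (the tilde-path).  The set P(x,o) of such tails p.  Since in an
   acyclic graph every directed path visits at most #|V| nodes, the list
   of all such p is obtained by enumerating sequences of length < #|V|; distinct lengths give distinct sequences, so there are
   no duplicates. *)
Definition all_seqs_upto (V : finType) (m : nat) : seq (seq V) :=
  [seq val t | n <- iota 0 m, t <- enum [set: n.-tuple V]].

Definition paths_tails (V : finType) (e : rel V) (x o : V) : seq (seq V) :=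
  [seq p <- all_seqs_upto V #|V| | path e x p && (last x p == o)].

From mathcomp Require Import all_boot all_order all_algebra.
Import Order.TTheory GRing.Theory Num.Theory.
Set Implicit Arguments. Unset Strict Implicit. Unset Printing Implicit Defensive.

(* Let inflow v be the left-hand side with o replaced by an arbitrary node v.
   Splitting off the last edge of each path gives
     inflow v = [v is an input] + (1 / d_v) * \sum_(u -> v) inflow u,
   so inflow v = 1 for every node v, by induction on the length of the longest
   path ending at v (an input contributes its empty path, any other node
   averages its d_v > 0 predecessors).  Acyclicity bounds path lengths by #|V|:
   this makes the induction terminate and makes paths_tails list every path. *)


Section SeqsUpto.
Variable V : finType.

Lemma mem_all_seqs_upto m s : (s \in all_seqs_upto V m) = (size s < m).
Proof.
apply/allpairsPdep/idP => [[n [t [n_m _ ->]]] | s_m].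
  by move: n_m; rewrite mem_iota size_tuple.
exists (size s), (in_tuple s); split=> //; last by rewrite mem_enum inE.
by rewrite mem_iota.
Qed.

Lemma all_seqs_upto_uniq m : uniq (all_seqs_upto V m).
Proof.
apply: allpairs_uniq_dep => [|n _|[n t] [n' t'] _ _ /= eq_tt']; rewrite ?iota_uniq //.
  exact: enum_uniq.
have eq_nn' : n = n' by rewrite -(size_tuple t) -(size_tuple t') eq_tt'.
by case: n' / eq_nn' t' eq_tt' => t' /val_inj ->.
Qed.

End SeqsUpto.

Section AcyclicPaths.
Variables (V : finType) (e : rel V).
Hypothesis e_acyclic : acyclic e.

Lemma acyclic_path_uniq x p : path e x p -> uniq (x :: p).
Proof.
elim: p x => [//|y p IHp] x xyp; have /andP[_ yp] := xyp.
rewrite cons_uniq IHp // andbT; apply/negP => x_yp.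
move: xyp; case/splitPr: x_yp => p1 p2.
rewrite cat_path => /andP[p1p /= /andP[ex _]].
have := @e_acyclic x (rcons p1 x).
rewrite rcons_path p1p ex last_rcons eqxx.
by case: p1 {p1p ex} => [|? ?] /(_ isT isT).
Qed.

Lemma acyclic_path_size x p : path e x p -> size p < #|V|.
Proof. by move=> /acyclic_path_uniq/card_uniqP; rewrite /= => <-; apply: max_card. Qed.

Lemma mem_paths_tails x v p :
  (p \in paths_tails e x v) = path e x p && (last x p == v).
Proof.
rewrite mem_filter mem_all_seqs_upto; apply: andb_idr => /andP[xp _].
exact: acyclic_path_size xp.
Qed.

Lemma paths_tails_uniq x v : uniq (paths_tails e x v).
Proof. exact/filter_uniq/all_seqs_upto_uniq. Qed.

Lemma perm_paths_tails x v :
  perm_eq (paths_tails e x v)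
    (nseq (x == v) [::] ++
     [seq rcons p v | u <- enum [pred u | e u v], p <- paths_tails e x u]).
Proof.
set extensions := [seq rcons p v | u <- _, p <- _].
have mem_extensions q y :
    (rcons q y \in extensions) = path e x (rcons q y) && (y == v).
  apply/allpairsPdep/idP => [[u [q' [u_v q'_u /rcons_inj[-> ->]]]]|].
    move: u_v q'_u; rewrite mem_enum inE mem_paths_tails rcons_path eqxx andbT.
    by move=> e_uv /andP[-> /eqP->].
  rewrite rcons_path => /andP[/andP[xq e_qv] /eqP y_v]; subst y.
  by exists (last x q), q; rewrite mem_enum inE mem_paths_tails xq eqxx.
have nil_extensions : [::] \notin extensions.
  by apply/allpairsPdep => -[u [[|? ?] []]].
apply: uniq_perm => [||p]; first exact: paths_tails_uniq.
- rewrite cat_uniq; apply/and3P; split; first by case: (x == v).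
    apply/hasPn => -[/(negP nil_extensions)[]|q y _].
    by rewrite mem_nseq /= andbF.
  apply: allpairs_uniq_dep => [|u _|]; rewrite ?enum_uniq ?paths_tails_uniq //.
  move=> _ _ /allpairsPdep[u [q [_ q_u ->]]] /allpairsPdep[u' [q' [_ q'_u' ->]]] /=.
  case/rcons_inj => eq_qq'; move: q_u q'_u'; rewrite -eq_qq' !mem_paths_tails.
  by move=> /andP[_ /eqP<-] /andP[_ /eqP<-].
rewrite mem_paths_tails mem_cat mem_nseq.
case/lastP: p => [|q y]; first by rewrite (negbTE nil_extensions) orbF; case: (x == v).
by rewrite mem_extensions last_rcons; case: q => [|? ?]; rewrite /= andbF.
Qed.

End AcyclicPaths.

Lemma indeg_gt0 (V : finType) (e : rel V) v : ~~ input_node e v -> 0 < indeg e v.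
Proof. by case/forallPn => u /negPn e_uv; apply/card_gt0P; exists u; rewrite inE. Qed.

Section Inflow.
Variables (V : finType) (e : rel V) (R : numFieldType).
Hypothesis e_acyclic : acyclic e.
Local Open Scope ring_scope.

Definition path_weight (p : seq V) : R := \prod_(q <- p) (indeg e q)%:R^-1.

Definition inflow (v : V) : R :=
  \sum_(x | input_node e x) \sum_(p <- paths_tails e x v) path_weight p.

Lemma sum_path_weight_rec x v :
  \sum_(p <- paths_tails e x v) path_weight p =
  (x == v)%:R +
  (indeg e v)%:R^-1 * \sum_(u | e u v) \sum_(p <- paths_tails e x u) path_weight p.
Proof.
rewrite (perm_big _ (perm_paths_tails e_acyclic x v)) big_cat big_allpairs_dep /=.
congr (_ + _); first by case: (x == v); rewrite ?big_nil // big_seq1 /path_weight big_nil.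
rewrite big_enum mulr_sumr; apply: eq_bigr => u _; rewrite mulr_sumr.
by apply: eq_bigr => p _; rewrite /path_weight big_rcons mulrC.
Qed.

Lemma inflow_rec v :
  inflow v = (input_node e v)%:R + (indeg e v)%:R^-1 * \sum_(u | e u v) inflow u.
Proof.
rewrite /inflow; under eq_bigr do rewrite sum_path_weight_rec.
rewrite big_split -mulr_sumr exchange_big /=; congr (_ + _).
rewrite big_mkcond (bigD1 v) //= eqxx big1 ?addr0 => [|x /negbTE->]; last first.
  by rewrite mulr0n if_same.
by case: input_node.
Qed.

Lemma inflow_eq1_bounded N v :
  (forall x p, path e x p -> last x p = v -> (size p < N)%N) -> inflow v = 1.
Proof.
elim: N v => [|N IHN] v short_paths; first by have := short_paths v [::] isT erefl.
have inflow_pred u : e u v -> inflow u = 1.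
  move=> e_uv; apply: IHN => x p xp p_u.
  rewrite -ltnS -(size_rcons p v) (short_paths x) ?last_rcons //.
  by rewrite rcons_path xp p_u e_uv.
rewrite inflow_rec; case: (boolP (input_node e v)) => [v_input | v_internal].
  rewrite big_pred0 => [|u]; first by rewrite mulr0 addr0.
  exact/negbTE/(forallP v_input).
rewrite add0r (eq_bigr _ inflow_pred) sumr_const -cardsE.
by rewrite mulVf // pnatr_eq0 -lt0n indeg_gt0.
Qed.

Lemma inflow_eq1 v : inflow v = 1.
Proof. by apply: inflow_eq1_bounded => x p xp _; apply: acyclic_path_size xp. Qed.

End Inflow.

Local Open Scope ring_scope.

Theorem lemma2 (R : numFieldType) (V : finType) (e : rel V) (o : V) :
  acyclic e -> leaf_node e o ->
  \sum_(x | input_node e x)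
     \sum_(p <- paths_tails e x o)
        \prod_(q <- p) (indeg e q)%:R^-1 = (1 : R).
Proof. by move=> e_acyclic _; apply: (inflow_eq1 R e_acyclic). Qed.
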